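(* Let $V=\{0,1,2,3,4\}$ and $\mathcal{E}=\{(0,1),(1,2),(1,3),(2,4),(3,4)\}$. Let $A$ be the $|V|\times|\mathcal{E}|$ node–arc incidence matrix of the directed graph $(V,\mathcal{E})$ (for node $v$ and arc $e$, $A_{v,e}=1$ if $e$ leaves $v$, $A_{v,e}=-1$ if $e$ enters $v$, and $0$ otherwise), let $B$ be the $|\mathcal{E}|\times|V|$ matrix with $B_{(i,j),i}=1$ for each $(i,j)\in\mathcal{E}$ and all other entries $0$, let $I_{\mathcal{E}}$ and $I_V$ be identity matrices of dimensions $|\mathcal{E}|$ and $|V|$, and let $e_V^T$ be the $1\times|V|$ row vector of ones. Then the block matrix \[ C=\begin{pmatrix} A & 0 & 0\\ 0 & I_{\mathcal{E}} & -B\\ -I_{\mathcal{E}} & I_{\mathcal{E}} & 0\\ 0 & 0 & e_V^T\\ 0 & 0 & I_V\end{pmatrix}, \] whose three column blocks correspond to variables $\alpha\in\mathbb{R}^{\mathcal{E}}$, $w\in\mathbb{R}^{\mathcal{E}}$, $\delta\in\mathbb{R}^{V}$, is not totally unimodular.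
   Context: $C$ is the constraint matrix of the linearised adversarial sub-problem (a longest-path problem with up to $\Gamma$ units of delay) of the two-stage robust resource-constrained project scheduling problem, restricted to the arcs $\mathcal{E}$ of the extended project network: the row blocks correspond respectively to flow-conservation/source/sink constraints on $\alpha$, the constraints $w_{ij}\le\delta_i$, the constraints $w_{ij}\le\alpha_{ij}$, the budget constraint $\sum_i\delta_i\le\Gamma$, and the bounds $\delta_i\le1$. A matrix is totally unimodular if every square submatrix has determinant in $\{-1,0,1\}$. *)

From HB Require Import structures.
From mathcomp Require Import all_boot all_order all_algebra.
Set Implicit Arguments. Unset Strict Implicit. Unset Printing Implicit Defensive.
Import Order.TTheory GRing.Theory Num.Theory.
Local Open Scope ring_scope.

Definition totally_unimodular (m n : nat) (M : 'M[int]_(m, n)) : Prop :=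
  forall (k : nat) (f : 'I_k -> 'I_m) (g : 'I_k -> 'I_n),
    injective f -> injective g ->
    \det (mxsub f g M) \in [:: -1; 0; 1].

Definition arc_tail (e : 'I_5) : 'I_5 := inord (nth 0%N [:: 0; 1; 1; 2; 3]%N e).
Definition arc_head (e : 'I_5) : 'I_5 := inord (nth 0%N [:: 1; 2; 3; 4; 4]%N e).

Definition incA : 'M[int]_(5, 5) :=
  \matrix_(v < 5, e < 5) ((v == arc_tail e)%:R - (v == arc_head e)%:R).

Definition matB : 'M[int]_(5, 5) :=
  \matrix_(e < 5, v < 5) (v == arc_tail e)%:R.

Definition matC : 'M[int]_(5 + (5 + (5 + (1 + 5))), 5 + (5 + 5)) :=
  col_mx (row_mx incA (row_mx 0 0))
 (col_mx (row_mx 0 (row_mx 1%:M (- matB)))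
 (col_mx (row_mx (- 1%:M) (row_mx 1%:M 0))
 (col_mx (row_mx 0 (row_mx 0 (const_mx 1 : 'M[int]_(1, 5))))
         (row_mx 0 (row_mx 0 1%:M))))).

(** The rows (flow conservation at node 1), (w_12 <= delta_1),
    (w_13 <= delta_1), (w_12 <= alpha_12), (w_13 <= alpha_13) and the columns
    alpha_12, alpha_13, w_12, w_13, delta_1 cut out a 5x5 minor of determinant
    2: the out-flow of node 1 splits over two arcs whose delays share the
    variable delta_1.  Indeed, the flow row plus the two rows (w <= alpha)
    minus the two rows (w <= delta) is (0, 0, 0, 0, 2), and the remaining 4x4
    block is unimodular. *)

From mathcomp Require Import all_boot all_order all_algebra.
Import GRing.Theory.
Local Open Scope ring_scope.

Lemma expand_det_first_row (R : comPzRingType) n (A : 'M[R]_n.+1) :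
  \det A = \sum_(j < n.+1)
    A ord0 j * ((-1) ^+ j * \det (\matrix_(i, k) A (lift ord0 i) (lift j k))).
Proof.
rewrite (expand_det_row _ ord0); apply: eq_bigr => j _; congr (_ * _).
rewrite /cofactor add0n; congr (_ * \det _); apply/matrixP => i k.
by rewrite !mxE.
Qed.

Notation rowC := 'I_(5 + (5 + (5 + (1 + 5)))).
Notation colC := 'I_(5 + (5 + 5)).

Definition flow_row (v : 'I_5) : rowC := lshift _ v.
Definition w_delta_row (e : 'I_5) : rowC := rshift 5 (lshift _ e).
Definition w_alpha_row (e : 'I_5) : rowC := rshift 5 (rshift 5 (lshift _ e)).

Definition alpha_col (e : 'I_5) : colC := lshift _ e.
Definition w_col (e : 'I_5) : colC := rshift 5 (lshift _ e).
Definition delta_col (v : 'I_5) : colC := rshift 5 (rshift 5 v).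

Definition node1 : 'I_5 := @Ordinal 5 1 isT.
Definition arc12 : 'I_5 := @Ordinal 5 1 isT.
Definition arc13 : 'I_5 := @Ordinal 5 2 isT.

Definition minor_rows : 5.-tuple rowC :=
  [tuple flow_row node1; w_delta_row arc12; w_delta_row arc13;
         w_alpha_row arc12; w_alpha_row arc13].
Definition minor_cols : 5.-tuple colC :=
  [tuple alpha_col arc12; alpha_col arc13; w_col arc12; w_col arc13;
         delta_col node1].

Lemma minor_rows_inj : injective (tnth minor_rows).
Proof. exact/tuple_uniqP. Qed.

Lemma minor_cols_inj : injective (tnth minor_cols).
Proof. exact/tuple_uniqP. Qed.

Definition minor_witness : 'M[int]_5 := \matrix_(i, j) nth 0 (nth [::]
  [:: [::  1;  1; 0; 0;  0];
      [::  0;  0; 1; 0; -1];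
      [::  0;  0; 0; 1; -1];
      [:: -1;  0; 1; 0;  0];
      [::  0; -1; 0; 1;  0]] i) j.

Lemma mxsub_minorE :
  mxsub (tnth minor_rows) (tnth minor_cols) matC = minor_witness.
Proof.
apply/matrixP=> i j; rewrite [LHS]mxE [RHS]mxE.
rewrite (tnth_nth (flow_row node1)) (tnth_nth (alpha_col arc12)).
case: i => [[|[|[|[|[|?]]]]] Hi] //; case: j => [[|[|[|[|[|?]]]]] Hj] //;
  rewrite /= /matC /flow_row /w_delta_row /w_alpha_row
    /alpha_col /w_col /delta_col
    !(col_mxEu, col_mxEd, row_mxEl, row_mxEr) !mxE //=.
all: by rewrite /arc_tail /arc_head -!val_eqE /= !inordK.
Qed.

Lemma det_minor_witness : \det minor_witness = 2.
Proof.
do 5 rewrite !expand_det_first_row !big_ord_recl !big_ord0 !mxE /=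
  ?mul0r ?add0r ?addr0.
by rewrite !det_mx00.
Qed.

Theorem mainTheorem2 : ~ totally_unimodular matC.
Proof.
move=> /(_ 5 _ _ minor_rows_inj minor_cols_inj).
by rewrite mxsub_minorE det_minor_witness.
Qed.
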